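(* For every $O\in\mathcal P_n$: 1. $\log U(O)=\sum_{\gamma\in\Gamma}\log U_\gamma(O)$. 2. For every $\gamma\in\Gamma$, $\log U_\gamma(O)=0$ if $\mathrm{supp}(O)\not\subseteq\gamma$; and $\log U(O)=0$ if $\mathrm{supp}(O)\not\subseteq\gamma$ for all $\gamma\in\Gamma$.
   Context: $\mathcal P_n=\{I,X,Y,Z\}^{\otimes n}$ (no phases); $[[A,B]]=1$ if $A,B$ commute and $-1$ otherwise. $\Gamma$ is a finite collection of subsets $\gamma\subseteq\{1,\dots,n\}$; each $\gamma$ carries a Pauli channel with error distribution $P_\gamma$ on $\mathcal P_n$ with $P_\gamma(e)=0$ unless $\mathrm{supp}(e)\subseteq\gamma$, and $P_\gamma(I)>1/2$, $P_\gamma(e)>0$ for all non-identity $e$ supported in $\gamma$. Local Pauli eigenvalues: $\Lambda_\gamma(O)=\sum_eP_\gamma(e)[[e,O]]$ (these are positive and depend only on $O_\gamma$, the restriction of $O$ to $\gamma$ with identity elsewhere). The total channel has eigenvalues $\Lambda(O)=\prod_{\gamma}\Lambda_\gamma(O_\gamma)$. Transformed eigenvalues: $\log U(O)=-\frac{2}{4^n}\sum_{O'\in\mathcal P_n}[[O',O]]\log\Lambda(O')$ and $\log U_\gamma(O)=-\frac{2}{4^n}\sum_{O'\in\mathcal P_n}[[O',O]]\log\Lambda_\gamma(O'_\gamma)$. *)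

From HB Require Import structures.
From mathcomp Require Import all_boot all_order all_algebra.
From mathcomp Require Import all_classical all_reals all_analysis.
Set Implicit Arguments. Unset Strict Implicit. Unset Printing Implicit Defensive.
Import Order.TTheory GRing.Theory Num.Theory.
Local Open Scope ring_scope.

(* Single-qubit Paulis encoded as 'I_4 : 0 = I, 1 = X, 2 = Y, 3 = Z (no phases). *)
Definition pauli (n : nat) := {ffun 'I_n -> 'I_4}.

Definition pauliI (n : nat) : pauli n := [ffun=> ord0].

Definition supp (n : nat) (O : pauli n) : {set 'I_n} := [set i | O i != ord0].

Definition anticomm1 (a b : 'I_4) : bool := [&& a != ord0, b != ord0 & a != b].

(* [[A,B]] = 1 if A,B commute, -1 otherwise  (= (-1)^(# anticommuting sites)) *)
Definition comm_sign (R : realType) (n : nat) (A B : pauli n) : R :=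
  (-1) ^+ #|[set i | anticomm1 (A i) (B i)]|.

Definition restrict (n : nat) (O : pauli n) (g : {set 'I_n}) : pauli n :=
  [ffun i => if i \in g then O i else ord0].

Definition Lambda_loc (R : realType) (n : nat) (Pg : pauli n -> R) (O : pauli n) : R :=
  \sum_(e : pauli n) Pg e * comm_sign R e O.

Definition Lambda_tot (R : realType) (n : nat) (Gam : {set {set 'I_n}})
    (P : {set 'I_n} -> pauli n -> R) (O : pauli n) : R :=
  \prod_(g in Gam) Lambda_loc (P g) (restrict O g).

Definition logU (R : realType) (n : nat) (Gam : {set {set 'I_n}})
    (P : {set 'I_n} -> pauli n -> R) (O : pauli n) : R :=
  - (2 / 4 ^+ n) * \sum_(O' : pauli n) comm_sign R O' O * ln (Lambda_tot Gam P O').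

Definition logU_loc (R : realType) (n : nat) (g : {set 'I_n})
    (Pg : pauli n -> R) (O : pauli n) : R :=
  - (2 / 4 ^+ n) * \sum_(O' : pauli n) comm_sign R O' O * ln (Lambda_loc Pg (restrict O' g)).

Definition good_channel (R : realType) (n : nat) (g : {set 'I_n}) (Pg : pauli n -> R) : Prop :=
  [/\ (forall e, 0 <= Pg e),
      \sum_(e : pauli n) Pg e = 1,
      (forall e, ~~ (supp e \subset g) -> Pg e = 0),
      1 / 2 < Pg (pauliI n) &
      (forall e, e != pauliI n -> supp e \subset g -> 0 < Pg e)].

(** Since [ln] turns the product [Lambda = prod_g Lambda_g] into a sum (all
    local eigenvalues are positive because [P_g(I) > 1/2]), [log U] is the sum
    of the [log U_g], as both are the same linear transform of [log Lambda].
    If [O] has a site [i] outside [g], multiplying [O'] at [i] by a Pauli that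
    anticommutes with [O_i] is an involution of the Paulis which leaves [O'_g]
    unchanged and flips [[O',O]]; so the sum defining [log U_g(O)] equals its
    own negative and vanishes. *)

From Pilot Require Import Defs.
From HB Require Import structures.
From mathcomp Require Import all_boot all_order all_algebra.
From mathcomp Require Import all_classical all_reals all_analysis.
From mathcomp Require Import lra.
Import Order.TTheory GRing.Theory Num.Theory.
Local Open Scope ring_scope.

(* Phase-free multiplication by a Pauli anticommuting with [a] (when [a <> I]):
   by [Y] if [a = X], by [X] otherwise. *)
Definition flip1_nat (a x : nat) : nat :=
  if a == 1%N then match x with 0 => 2 | 1 => 3 | 2 => 0 | _ => 1 end
  else match x with 0 => 1 | 1 => 0 | 2 => 3 | _ => 2 end.

Lemma flip1_nat_lt4 (a x : nat) : (flip1_nat a x < 4)%N.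
Proof. by rewrite /flip1_nat; case: (a == 1%N); do 3?case: x => [|x]. Qed.

Definition flip1 (a x : 'I_4) : 'I_4 := Ordinal (flip1_nat_lt4 a x).

Lemma flip1K (a : 'I_4) : involutive (flip1 a).
Proof.
case: a => a ha [x hx]; apply: val_inj.
by do 4?[case: a ha => [|a] ha] => //; do 4?[case: x hx => [|x] hx].
Qed.

Lemma anticomm1_flip1 (a x : 'I_4) :
  a != ord0 -> anticomm1 (flip1 a x) a = ~~ anticomm1 x a.
Proof.
case: a => a ha; case: x => x hx.
by do 4?[case: a ha => [|a] ha] => //; do 4?[case: x hx => [|x] hx].
Qed.

Lemma ln_prod (R : realType) (I : Type) (r : seq I) (A : pred I) (f : I -> R) :
  (forall i, A i -> 0 < f i) ->
  ln (\prod_(i <- r | A i) f i) = \sum_(i <- r | A i) ln (f i).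
Proof.
move=> f_gt0; apply: (big_morph_in Num.pos).
- by move=> x y x_gt0 y_gt0; rewrite rpredM.
- exact: rpred1.
- by move=> x y x_gt0 y_gt0; rewrite lnM.
- exact: ln1.
- by move=> i /f_gt0; rewrite posrE.
Qed.

Section PauliSums.
Variables (R : realType) (n : nat).

Lemma comm_signIl (O : pauli n) : comm_sign R (pauliI n) O = 1.
Proof.
rewrite /comm_sign (_ : [set i | _] = finset.set0) ?cards0 ?expr0 //.
by apply/setP => i; rewrite !inE ffunE.
Qed.

Lemma comm_sign_geN1 (A B : pauli n) : -1 <= comm_sign R A B.
Proof. by rewrite /comm_sign -signr_odd; case: odd; rewrite ?expr1 ?expr0 ?lexx ?lerN10. Qed.

Lemma Lambda_loc_gt0 (Pg : pauli n -> R) (O : pauli n) :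
  (forall e, 0 <= Pg e) -> \sum_e Pg e = 1 -> 1 / 2 < Pg (pauliI n) ->
  0 < Lambda_loc Pg O.
Proof.
move=> Pg_ge0 Pg_sum1 PgI_gt; rewrite /Lambda_loc (bigD1 (pauliI n)) //=.
rewrite comm_signIl mulr1.
have rest_ge : - (1 - Pg (pauliI n)) <= \sum_(e | e != pauliI n) Pg e * comm_sign R e O.
  have -> : 1 - Pg (pauliI n) = \sum_(e | e != pauliI n) Pg e.
    by rewrite -Pg_sum1 (bigD1 (pauliI n)) //= addrAC subrr add0r.
  rewrite -sumrN.
  apply: ler_sum => e _; rewrite -mulrN1 ler_wpM2l //; exact: comm_sign_geN1.
lra.
Qed.

Definition flip_at (i : 'I_n) (a : 'I_4) (O' : pauli n) : pauli n :=
  [ffun j => if j == i then flip1 a (O' j) else O' j].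

Lemma flip_atK i a : involutive (flip_at i a).
Proof.
move=> O'; apply/ffunP => j; rewrite !ffunE.
by case: eqP => // ->; rewrite flip1K.
Qed.

Lemma comm_sign_flip_at i (O O' : pauli n) :
  O i != ord0 -> comm_sign R (flip_at i (O i) O') O = - comm_sign R O' O.
Proof.
move=> Oi; rewrite /comm_sign.
set S := [set j | _]; set T := [set j | _].
have ST : S :\ i = T :\ i by apply/setP => j; rewrite !inE ffunE; case: eqP.
have Si : (i \in S) = (i \notin T) by rewrite !inE ffunE eqxx anticomm1_flip1.
rewrite (cardsD1 i S) (cardsD1 i T) ST Si.
by case: (i \in T); rewrite /= ?add0n ?add1n exprS ?mulN1r ?mul1r ?opprK.
Qed.

Lemma restrict_flip_at (g : {set 'I_n}) i a (O' : pauli n) :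
  i \notin g -> Defs.restrict (flip_at i a O') g = Defs.restrict O' g.
Proof.
move=> gi; apply/ffunP => j; rewrite !ffunE.
by case: eqP => // ->; rewrite (negbTE gi).
Qed.

Lemma sum_comm_sign_restrict_eq0 (g : {set 'I_n}) (f : pauli n -> R) (O : pauli n) :
  ~~ (supp O \subset g) ->
  \sum_(O' : pauli n) comm_sign R O' O * f (Defs.restrict O' g) = 0.
Proof.
case/subsetPn => i; rewrite inE => Oi gi.
set S := \sum_O' _.
have S_opp : S = - S.
  rewrite {1}/S (reindex_inj (can_inj (flip_atK i (O i)))) /= -sumrN.
  by apply: eq_bigr => O' _; rewrite comm_sign_flip_at // restrict_flip_at // mulNr.
by apply/eqP; rewrite -eqNr -S_opp.
Qed.

Lemma logU_loc_eq0 (g : {set 'I_n}) (Pg : pauli n -> R) (O : pauli n) :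
  ~~ (supp O \subset g) -> logU_loc g Pg O = 0.
Proof.
move=> Og; rewrite /logU_loc.
by rewrite (sum_comm_sign_restrict_eq0 _ (fun O' => ln (Lambda_loc Pg O')) _ Og) mulr0.
Qed.

Lemma logU_sum_loc (Gam : {set {set 'I_n}}) (P : {set 'I_n} -> pauli n -> R) :
  (forall g, g \in Gam -> good_channel g (P g)) ->
  forall O, logU Gam P O = \sum_(g in Gam) logU_loc g (P g) O.
Proof.
move=> hP O; rewrite /logU /logU_loc -mulr_sumr exchange_big /=; congr (_ * _).
apply: eq_bigr => O' _; rewrite -mulr_sumr /Lambda_tot ln_prod // => g /hP[? ? _ ? _].
exact: Lambda_loc_gt0.
Qed.

End PauliSums.

Theorem lemma1 (R : realType) (n : nat) (Gam : {set {set 'I_n}})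
    (P : {set 'I_n} -> pauli n -> R)
    (hP : forall g, g \in Gam -> good_channel g (P g)) :
  forall O : pauli n,
    logU Gam P O = \sum_(g in Gam) logU_loc g (P g) O /\
    (forall g, g \in Gam -> ~~ (supp O \subset g) -> logU_loc g (P g) O = 0) /\
    ((forall g, g \in Gam -> ~~ (supp O \subset g)) -> logU Gam P O = 0).
Proof.
move=> O; split; first exact: logU_sum_loc.
split=> [g _|Oout]; first exact: logU_loc_eq0.
by rewrite logU_sum_loc //; apply: big1 => g /Oout; apply: logU_loc_eq0.
Qed.
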